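(* Let $P$ be a finite poset, $R$ a commutative unital ring, and $D$ a derivation of $I^3(P,R)$. Then $D(e_x)=0$ for all $x\in P$.
   Context: For a finite poset $P$, $P^3_\le=\{(x,y,z)\in P^3: x\le y\le z\}$, and $I^3(P,R)$ is the $R$-module of functions $f:P^3_\le\to R$ with multiplication $(fg)(x_1,x_2,x_3)=\sum f(x_1,y_1,y_2)g(y_1,y_2,x_3)$ over all $x_1\le y_1\le x_2\le y_2\le x_3$. $e_x\in I^3(P,R)$ is the function equal to $1$ at $(x,x,x)$ and $0$ elsewhere. A derivation is an $R$-linear map $D:I^3(P,R)\to I^3(P,R)$ with $D(fg)=D(f)g+fD(g)$. *)

From HB Require Import structures.
From mathcomp Require Import all_boot all_order all_algebra.
Set Implicit Arguments. Unset Strict Implicit. Unset Printing Implicit Defensive.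
Import Order.Theory GRing.Theory.
Local Open Scope order_scope.

Definition chain3 (d : Order.disp_t) (P : finPOrderType d) : predArgType :=
  {t : P * P * P | (t.1.1 <= t.1.2) && (t.1.2 <= t.2)}.

Section I3.
Variables (d : Order.disp_t) (P : finPOrderType d) (R : comPzRingType).
Local Open Scope ring_scope.

Definition I3 := {ffun chain3 P -> R}.

(* value of f at (x,y,z); 0 if (x,y,z) is not a chain (never used then) *)
Definition I3val (f : I3) (x y z : P) : R :=
  match (insub (x, y, z) : option (chain3 P)) with
  | Some t => f t | None => 0 end.

Definition I3mul (f g : I3) : I3 :=
  [ffun t : chain3 P =>
     let: (x1, x2, x3) := val t in
     \sum_(y1 : P | ((x1 <= y1) && (y1 <= x2))%O)
       \sum_(y2 : P | ((x2 <= y2) && (y2 <= x3))%O)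
         I3val f x1 y1 y2 * I3val g y1 y2 x3].

Definition I3add (f g : I3) : I3 := [ffun t => f t + g t].
Definition I3scale (r : R) (f : I3) : I3 := [ffun t => r * f t].

Definition I3e (x : P) : I3 := [ffun t => if val t == (x, x, x) then 1 else 0].

Definition is_derivation (D : I3 -> I3) : Prop :=
  [/\ forall f g, D (I3add f g) = I3add (D f) (D g),
      forall r f, D (I3scale r f) = I3scale r (D f)
    & forall f g, D (I3mul f g) = I3add (I3mul (D f) g) (I3mul f (D g))].
End I3.

(* Write e for e_x and h for D(e).  Since e is idempotent, h = h e + e h, and
   computing both products shows that h vanishes except at the triples
   (a,x,x) and (x,x,c), and that h(x,x,x) = 2 h(x,x,x).  The remaining values
   are killed by differentiating the zero products e_(a,a,x) e = 0 for a <> x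
   and e e_(x,c,c) = 0 for c <> x, where e_(p,q,r) is the indicator of the
   chain (p,q,r): evaluated at (a,a,x), resp. (x,c,c), the derivative of the
   product is exactly h(a,x,x), resp. h(x,x,c). *)

From mathcomp Require Import all_boot all_order all_algebra.
Set Implicit Arguments. Unset Strict Implicit. Unset Printing Implicit Defensive.
Import Order.Theory GRing.Theory.
Local Open Scope ring_scope.

Section Incidence.
Variables (d : Order.disp_t) (P : finPOrderType d) (R : comPzRingType).
Implicit Types (f g : I3 P R) (a b c p q r x : P).

Definition I3delta p q r : I3 P R := [ffun t => (val t == (p, q, r))%:R].

Lemma I3eE x : I3e R x = I3delta x x x.
Proof. by apply/ffunP => t; rewrite !ffunE; case: eqP. Qed.

Lemma I3val_chain f (t : chain3 P) : f t = I3val f (val t).1.1 (val t).1.2 (val t).2.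
Proof.
case: t => [[[a b] c] abc]; rewrite /I3val; case: insubP => [u _ uE|] /=.
  by congr (f _); apply: val_inj; rewrite uE.
by rewrite abc.
Qed.

Lemma I3_ext f g :
  (forall a b c, (a <= b)%O -> (b <= c)%O -> I3val f a b c = I3val g a b c) -> f = g.
Proof.
move=> fg; apply/ffunP => t; rewrite !I3val_chain.
by case: t => [[[a b] c]] /= /andP[]; apply: fg.
Qed.

Lemma I3val0 a b c : I3val ([ffun _ => 0] : I3 P R) a b c = 0.
Proof. by rewrite /I3val; case: insubP => [u _ _|]; rewrite ?ffunE. Qed.

Lemma I3val_add f g a b c : I3val (I3add f g) a b c = I3val f a b c + I3val g a b c.
Proof. by rewrite /I3val; case: insubP => [u _ _|]; rewrite ?ffunE ?addr0. Qed.

Lemma I3val_delta p q r a b c : (p <= q)%O -> (q <= r)%O ->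
  I3val (I3delta p q r) a b c = ((a, b, c) == (p, q, r))%:R.
Proof.
move=> pq qr; rewrite /I3val; case: insubP => [u _ uE|]; first by rewrite ffunE uE.
by case: eqP => // -[-> -> ->]; rewrite /= pq qr.
Qed.

Lemma I3val_mul f g a b c : (a <= b)%O -> (b <= c)%O ->
  I3val (I3mul f g) a b c =
    \sum_(y1 : P | ((a <= y1) && (y1 <= b))%O)
      \sum_(y2 : P | ((b <= y2) && (y2 <= c))%O) I3val f a y1 y2 * I3val g y1 y2 c.
Proof.
move=> ab bc; rewrite /I3val; case: insubP => [u _ uE|]; first by rewrite ffunE uE.
by rewrite /= ab bc.
Qed.

Lemma sum2_only1 (Q1 Q2 : pred P) (i j : P) (G : P -> P -> R) :
    (forall y1 y2, Q1 y1 -> Q2 y2 -> (y1, y2) != (i, j) -> G y1 y2 = 0) ->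
  \sum_(y1 | Q1 y1) \sum_(y2 | Q2 y2) G y1 y2 = if Q1 i && Q2 j then G i j else 0.
Proof.
move=> G0; case: ifPn => [/andP[Q1i Q2j]|notQ].
  rewrite (big_only1 _ Q1i) => [|y1 y1i Q1y1].
    rewrite (big_only1 _ Q2j) // => y2 y2j Q2y2.
    by apply: G0; rewrite // xpair_eqE (negPf y2j) andbF.
  by apply: big1 => y2 Q2y2; apply: G0; rewrite // xpair_eqE (negPf y1i).
apply: big1 => y1 Q1y1; apply: big1 => y2 Q2y2; apply: G0 => //.
by apply: contraNneq notQ => -[<- <-]; rewrite Q1y1.
Qed.

Lemma I3val_delta_mul p q r f a b c :
    (p <= q)%O -> (q <= r)%O -> (a <= b)%O -> (b <= c)%O ->
  I3val (I3mul (I3delta p q r) f) a b c =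
    if [&& a == p, q <= b, b <= r & r <= c]%O then I3val f q r c else 0.
Proof.
move=> pq qr ab bc; rewrite I3val_mul // (sum2_only1 (i:=q) (j:=r)); last first.
  move=> y1 y2 _ _ ne.
  by move: ne; rewrite I3val_delta // !xpair_eqE -andbA => /negPf->; rewrite andbF mul0r.
rewrite I3val_delta // !xpair_eqE !eqxx !andbT.
by have [-> | _] := eqVneq a p; rewrite ?mul1r ?pq ?mul0r ?if_same.
Qed.

Lemma I3val_mul_delta p q r f a b c :
    (p <= q)%O -> (q <= r)%O -> (a <= b)%O -> (b <= c)%O ->
  I3val (I3mul f (I3delta p q r)) a b c =
    if [&& c == r, a <= p, p <= b & b <= q]%O then I3val f a p q else 0.
Proof.
move=> pq qr ab bc; rewrite I3val_mul // (sum2_only1 (i:=p) (j:=q)); last first.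
  move=> y1 y2 _ _ ne.
  by move: ne; rewrite I3val_delta // !xpair_eqE => /negPf->; rewrite mulr0.
rewrite I3val_delta // !xpair_eqE !eqxx /=.
by have [-> | _] := eqVneq c r; rewrite ?mulr1 ?qr ?andbT ?andbA ?mulr0 ?if_same.
Qed.

Lemma I3val_e_mul x f a b c : (a <= b)%O -> (b <= c)%O ->
  I3val (I3mul (I3e R x) f) a b c = if (a == x) && (b == x) then I3val f x x c else 0.
Proof.
move=> ab bc; rewrite I3eE I3val_delta_mul // [b == x]eq_le.
by have [<- | _] := eqVneq a x; rewrite //= (le_trans ab bc) ab !andbT.
Qed.

Lemma I3val_mul_e x f a b c : (a <= b)%O -> (b <= c)%O ->
  I3val (I3mul f (I3e R x)) a b c = if (b == x) && (c == x) then I3val f a x x else 0.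
Proof.
move=> ab bc; rewrite I3eE I3val_mul_delta // [b == x]eq_le.
by have [<- | _] := eqVneq c x; rewrite ?andbF //= (le_trans ab bc) bc !andbT.
Qed.

Lemma I3e_idem x : I3mul (I3e R x) (I3e R x) = I3e R x.
Proof.
apply: I3_ext => a b c ab bc; rewrite I3val_e_mul // I3eE !I3val_delta //.
by rewrite !xpair_eqE eqxx; case: (_ && _).
Qed.

End Incidence.

Section Derivation.
Variables (d : Order.disp_t) (P : finPOrderType d) (R : comPzRingType).
Variable D : I3 P R -> I3 P R.
Hypothesis derD : is_derivation D.

Lemma derivation0 : D [ffun _ => 0] = [ffun _ => 0].
Proof.
have zero_scale : [ffun _ => 0] = I3scale 0 ([ffun _ => 0] : I3 P R).
  by apply/ffunP => t; rewrite !ffunE mul0r.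
case: derD => _ derZ _; rewrite {1}zero_scale derZ.
by apply/ffunP => t; rewrite !ffunE mul0r.
Qed.

Lemma derivation_mul_eq0 (f g : I3 P R) : I3mul f g = [ffun _ => 0] ->
  I3add (I3mul (D f) g) (I3mul f (D g)) = [ffun _ => 0].
Proof. by case: derD => _ _ derM fg0; rewrite -derM fg0 derivation0. Qed.

Variable x : P.
Local Notation e := (I3e R x).
Local Notation h := (D (I3e R x)).

Lemma I3val_De_split a b c : (a <= b)%O -> (b <= c)%O ->
  I3val h a b c = (if (b == x) && (c == x) then I3val h a x x else 0)
                  + (if (a == x) && (b == x) then I3val h x x c else 0).
Proof.
case: derD => _ _ derM ab bc.
by rewrite -{1}I3e_idem derM I3val_add I3val_mul_e // I3val_e_mul.
Qed.

Lemma I3val_De_xxx : I3val h x x x = 0.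
Proof.
have := I3val_De_split (lexx x) (lexx x); rewrite eqxx /=.
by rewrite -[LHS]addr0 => /addrI.
Qed.

Lemma I3val_De_axx a : (a <= x)%O -> I3val h a x x = 0.
Proof.
move=> ax; have [-> | nax] := eqVneq a x; first exact: I3val_De_xxx.
have Ge0 : I3mul (I3delta R a a x) e = [ffun _ => 0].
  apply: I3_ext => a' b' c' ab' bc'; rewrite I3val_mul_e // I3val0.
  case: ifP => // _.
  by rewrite I3val_delta // !xpair_eqE [x == a]eq_sym (negPf nax) andbF.
have := congr1 (fun f => I3val f a a x) (derivation_mul_eq0 Ge0).
rewrite I3val_add I3val0 I3val_mul_e // I3val_delta_mul //.
by rewrite (negPf nax) !eqxx !lexx ax add0r.
Qed.

Lemma I3val_De_xxc c : (x <= c)%O -> I3val h x x c = 0.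
Proof.
move=> xc; have [-> | ncx] := eqVneq c x; first exact: I3val_De_xxx.
have eG0 : I3mul e (I3delta R x c c) = [ffun _ => 0].
  apply: I3_ext => a' b' c' ab' bc'; rewrite I3val_e_mul // I3val0.
  case: ifP => // _.
  by rewrite I3val_delta // !xpair_eqE [x == c]eq_sym (negPf ncx) andbF.
have := congr1 (fun f => I3val f x c c) (derivation_mul_eq0 eG0).
rewrite I3val_add I3val0 I3val_e_mul // I3val_mul_delta //.
by rewrite (negPf ncx) !eqxx !lexx xc addr0.
Qed.

End Derivation.

Theorem lemma4p3 (d : Order.disp_t) (P : finPOrderType d) (R : comPzRingType)
  (D : I3 P R -> I3 P R) :
  is_derivation D -> forall x : P, D (I3e R x) = [ffun _ => 0%R].
Proof.
move=> derD x; apply: I3_ext => a b c ab bc.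
rewrite I3val0 (I3val_De_split derD) //.
have [bx | _] := eqVneq b x; last by rewrite !andbF addr0.
rewrite bx in ab bc.
by rewrite (I3val_De_axx derD ab) (I3val_De_xxc derD bc) !if_same addr0.
Qed.
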